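(* Let $0\le a\le b\le n$ be integers with $a+b\le n$, and let $\varepsilon(a,b)$ be defined by $\mathbb E_{\mu_{ab}}[X]=\frac{a+b}{2}+\varepsilon(a,b)$, where $X$ has law $\mu_{ab}$. Then $\varepsilon(a,b)\ge0$. Moreover, $\varepsilon(a,b)\le\varepsilon(c,d)$ for any pair of integers $c,d$ with $c\le\min\{a,d\}\le\max\{a,d\}\le b$.
   Context: Fix $\beta>0$ and integer $n\ge1$. For integers $0\le a\le b\le n$, $\mu_{ab}$ is the probability distribution on $\{0,1,\dots,n\}$ given by $\mu_{ab}(j)=e^{-\beta(b-a)-2\beta(a-j)}/Z$ for $0\le j<a$, $\mu_{ab}(j)=e^{-\beta(b-a)}/Z$ for $a\le j\le b$, and $\mu_{ab}(j)=e^{-\beta(b-a)-2\beta(j-b)}/Z$ for $b<j\le n$, with $Z$ a normalizing constant. (This is the conditional law of the height at a site of the SOS model given that its two neighbouring heights have minimum $a$ and maximum $b$; i.e., the law of the new height after a column update.) For $c\le d$, $\varepsilon(c,d)$ is defined in the same way, $\varepsilon(c,d)=\mathbb E_{\mu_{cd}}[X]-\frac{c+d}2$. *)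

From Stdlib Require Import Reals Lra Lia Arith.
Open Scope R_scope.

Definition sos_weight (beta : R) (a b j : nat) : R :=
  if (j <? a)%nat then exp (- beta * (INR b - INR a) - 2 * beta * (INR a - INR j))
  else if (b <? j)%nat then exp (- beta * (INR b - INR a) - 2 * beta * (INR j - INR b))
  else exp (- beta * (INR b - INR a)).

(* Normalizing constant Z = sum_{j=0}^n weight j  (sum_f_R0 f n has n+1 terms). *)
Definition sos_Z (beta : R) (n a b : nat) : R :=
  sum_f_R0 (fun j => sos_weight beta a b j) n.

Definition mu (beta : R) (n a b j : nat) : R :=
  sos_weight beta a b j / sos_Z beta n a b.

Definition mu_mean (beta : R) (n a b : nat) : R :=
  sum_f_R0 (fun j => INR j * mu beta n a b j) n.

Definition eps (beta : R) (n c d : nat) : R :=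
  mu_mean beta n c d - (INR c + INR d) / 2.

(* With x = exp(-2 beta), s = d - c, and left/right tails of lengths c and
   n - d, the weights of mu_cd are geometric in x outside [c, d], so
   eps(c,d) is an explicit rational function of x, s, c, x^c, n - d and
   x^(n-d).  Moving d one step to the right lowers eps: clearing denominators,
   the difference is a polynomial with a sum-of-nonnegative-terms certificate.
   By the reflection j |-> n - j the same holds for moving c to the right, so
   eps is decreasing in both arguments, which gives the comparison.  For
   nonnegativity, a + b <= n means the right tail is at least as long as the
   left one, so the right tail pulls the mean up at least as much as the left
   tail pulls it down. *)
From Stdlib Require Import Reals Lra Lia.
Open Scope R_scope.

Fixpoint psum (f : nat -> R) (k : nat) : R :=
  match k with O => 0 | S k => psum f k + f k end.

Lemma sum_f_R0_psum f n : sum_f_R0 f n = psum f (S n).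
Proof. induction n as [|n IH]; simpl in *; [lra | now rewrite IH]. Qed.

Lemma psum_ext f g k : (forall i, (i < k)%nat -> f i = g i) -> psum f k = psum g k.
Proof.
  induction k as [|k IH]; intros Hfg; simpl; [reflexivity|].
  rewrite IH, (Hfg k) by (lia || (intros; apply Hfg; lia)); reflexivity.
Qed.

Lemma psum_app f a b : psum f (a + b) = psum f a + psum (fun i => f (a + i)%nat) b.
Proof.
  induction b as [|b IH]; simpl; [rewrite Nat.add_0_r; lra|].
  rewrite Nat.add_succ_r; simpl; rewrite IH; lra.
Qed.

Lemma psum_shift f k : psum f (S k) = f O + psum (fun i => f (S i)) k.
Proof. induction k as [|k IH]; simpl in *; [lra | rewrite IH; lra]. Qed.

Lemma psum_plus f g k : psum (fun i => f i + g i) k = psum f k + psum g k.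
Proof. induction k; simpl; lra. Qed.

Lemma psum_scal r f k : psum (fun i => r * f i) k = r * psum f k.
Proof. induction k as [|k IH]; simpl; [|rewrite IH]; lra. Qed.

Lemma psum_const1 k : psum (fun _ => 1) k = INR k.
Proof. induction k as [|k IH]; simpl psum; [simpl; lra | rewrite IH, S_INR; ring]. Qed.

Lemma psum_INR k : psum INR k = INR k * (INR k - 1) / 2.
Proof. induction k as [|k IH]; simpl psum; [simpl; lra | rewrite IH, S_INR; field]. Qed.

Lemma psum_nonneg f k : (forall i, 0 <= f i) -> 0 <= psum f k.
Proof. intros Hf; induction k; simpl; [lra | specialize (Hf k); lra]. Qed.

Lemma psum_le_app f a b : (forall i, 0 <= f i) -> psum f a <= psum f (a + b).
Proof.
  intros Hf; rewrite psum_app.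
  assert (0 <= psum (fun i => f (a + i)%nat) b) by (apply psum_nonneg; auto).
  lra.
Qed.

Definition geom (x : R) (k : nat) : R := psum (fun i => x ^ S i) k.

Definition geom_moment (x : R) (k : nat) : R := psum (fun i => INR (S i) * x ^ S i) k.

Lemma geom_closed x k : x <> 1 -> geom x k = x * (1 - x ^ k) / (1 - x).
Proof.
  intros Hx.
  enough (E : (1 - x) * geom x k = x * (1 - x ^ k)) by (rewrite <- E; field; lra).
  unfold geom; induction k as [|k IH]; cbn [psum]; [simpl; ring|].
  rewrite Rmult_plus_distr_l, IH; simpl; ring.
Qed.

Lemma geom_moment_closed x k : x <> 1 ->
  geom_moment x k = x * (1 - x ^ k - INR k * x ^ k * (1 - x)) / ((1 - x) * (1 - x)).
Proof.
  intros Hx.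
  enough (E : (1 - x) * (1 - x) * geom_moment x k
              = x * (1 - x ^ k - INR k * x ^ k * (1 - x)))
    by (rewrite <- E; field; lra).
  unfold geom_moment; induction k as [|k IH]; cbn [psum]; [simpl; ring|].
  rewrite Rmult_plus_distr_l, IH, S_INR; cbn [pow]; ring.
Qed.

Lemma geom_nonneg x k : 0 <= x -> 0 <= geom x k.
Proof. intros Hx; apply psum_nonneg; intros; apply pow_le; lra. Qed.

Lemma geom_le_app x a b : 0 <= x -> geom x a <= geom x (a + b).
Proof. intros Hx; apply psum_le_app; intros; apply pow_le; lra. Qed.

Lemma geom_moment_le_app x a b : 0 <= x -> geom_moment x a <= geom_moment x (a + b).
Proof.
  intros Hx; apply psum_le_app; intros i.
  apply Rmult_le_pos; [apply pos_INR | apply pow_le; lra].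
Qed.

Lemma psum_pow_rev x c : psum (fun j => x ^ (c - j)) c = geom x c.
Proof.
  unfold geom; induction c as [|c IH]; [reflexivity|].
  rewrite psum_shift, Nat.sub_0_r; simpl (S c - S _)%nat.
  rewrite IH; cbn [psum]; lra.
Qed.

Lemma psum_INR_pow_rev x c :
  psum (fun j => INR j * x ^ (c - j)) c = INR c * geom x c - geom_moment x c.
Proof.
  induction c as [|c IH]; [unfold geom, geom_moment; simpl; ring|].
  rewrite psum_shift; simpl (S c - S _)%nat.
  rewrite (psum_ext _ (fun i => INR i * x ^ (c - i) + x ^ (c - i)))
    by (intros i _; rewrite S_INR; ring).
  rewrite psum_plus, IH, psum_pow_rev, Nat.sub_0_r.
  unfold geom, geom_moment; cbn [psum]; rewrite S_INR; simpl; ring.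
Qed.

Lemma psum_shifted_moment x r k :
  psum (fun i => (r + INR (S i)) * x ^ S i) k = r * geom x k + geom_moment x k.
Proof.
  unfold geom, geom_moment; rewrite <- psum_scal, <- psum_plus.
  apply psum_ext; intros; ring.
Qed.

Lemma exp_mult_INR t k : exp (INR k * t) = exp t ^ k.
Proof.
  induction k as [|k IH]; [simpl; rewrite Rmult_0_l, exp_0; reflexivity|].
  rewrite S_INR, Rmult_plus_distr_r, Rmult_1_l, exp_plus, IH; simpl; ring.
Qed.

Section Weights.
Variables (beta : R) (c d : nat).

Local Notation K := (exp (- beta * (INR d - INR c))).
Local Notation x := (exp (-2 * beta)).

Lemma sos_weight_below j : (j < c)%nat -> sos_weight beta c d j = K * x ^ (c - j).
Proof.
  intros Hj; unfold sos_weight; rewrite (proj2 (Nat.ltb_lt _ _) Hj).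
  rewrite <- exp_mult_INR, <- exp_plus, minus_INR by lia; f_equal; ring.
Qed.

Lemma sos_weight_between j : (c <= j <= d)%nat -> sos_weight beta c d j = K.
Proof.
  intros Hj; unfold sos_weight.
  now rewrite (proj2 (Nat.ltb_ge j c)), (proj2 (Nat.ltb_ge d j)) by lia.
Qed.

Lemma sos_weight_above j : (c <= d < j)%nat -> sos_weight beta c d j = K * x ^ (j - d).
Proof.
  intros Hj; unfold sos_weight.
  rewrite (proj2 (Nat.ltb_ge j c)), (proj2 (Nat.ltb_lt d j)) by lia.
  rewrite <- exp_mult_INR, <- exp_plus, minus_INR by lia; f_equal; ring.
Qed.

End Weights.

(* [s] is the length d - c of the flat part, [L = c] and [m = n - d] are the
   lengths of the two geometric tails. *)
Definition eps_geom (x s : R) (L m : nat) : R :=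
  (s / 2 * (geom x m - geom x L) + geom_moment x m - geom_moment x L)
  / (s + 1 + geom x L + geom x m).

Section ClosedForm.
Variables (beta : R) (n c d : nat).
Hypotheses (Hcd : (c <= d)%nat) (Hdn : (d <= n)%nat).

Local Notation K := (exp (- beta * (INR d - INR c))).
Local Notation x := (exp (-2 * beta)).

Let split_range : (S n = c + (S (d - c) + (n - d)))%nat.
Proof. lia. Qed.

Lemma sos_Z_closed :
  sos_Z beta n c d = K * (INR (S (d - c)) + geom x c + geom x (n - d)).
Proof.
  unfold sos_Z; rewrite sum_f_R0_psum, split_range, !psum_app.
  rewrite (psum_ext _ (fun j => K * x ^ (c - j)))
    by (intros; apply sos_weight_below; lia).
  rewrite (psum_ext (fun i => sos_weight beta c d (c + i)) (fun _ => K * 1))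
    by (intros; rewrite Rmult_1_r; apply sos_weight_between; lia).
  rewrite (psum_ext (fun i => sos_weight beta c d (c + (S (d - c) + i)))
                    (fun i => K * x ^ S i)).
  2:{ intros i _; rewrite sos_weight_above by lia; do 2 f_equal; lia. }
  rewrite !psum_scal, psum_pow_rev, psum_const1; unfold geom; ring.
Qed.

Lemma first_moment_closed :
  psum (fun j => INR j * sos_weight beta c d j) (S n)
  = K * (INR c * geom x c - geom_moment x c
         + (INR c * INR (S (d - c)) + INR (S (d - c)) * (INR (S (d - c)) - 1) / 2)
         + (INR d * geom x (n - d) + geom_moment x (n - d))).
Proof.
  rewrite split_range, !psum_app.
  rewrite (psum_ext _ (fun j => K * (INR j * x ^ (c - j))))
    by (intros; rewrite sos_weight_below by lia; ring).
  rewrite (psum_ext (fun i => INR (c + i) * sos_weight beta c d (c + i))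
                    (fun i => K * (INR c * 1 + INR i)))
    by (intros; rewrite sos_weight_between, plus_INR by lia; ring).
  rewrite (psum_ext (fun i => INR (c + (S (d - c) + i))
                              * sos_weight beta c d (c + (S (d - c) + i)))
                    (fun i => K * ((INR d + INR (S i)) * x ^ S i))).
  2:{ intros i _; rewrite sos_weight_above by lia.
      replace (c + (S (d - c) + i))%nat with (d + S i)%nat by lia.
      replace (d + S i - d)%nat with (S i) by lia.
      rewrite plus_INR; ring. }
  rewrite !psum_scal, psum_INR_pow_rev, psum_plus, psum_scal, psum_const1,
    psum_INR, psum_shifted_moment.
  ring.
Qed.

Lemma eps_closed : eps beta n c d = eps_geom x (INR d - INR c) c (n - d).
Proof.
  unfold eps, mu_mean, mu; rewrite sum_f_R0_psum.
  rewrite (psum_ext _ (fun j => / sos_Z beta n c d * (INR j * sos_weight beta c d j)))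
    by (intros; unfold Rdiv; ring).
  rewrite psum_scal, first_moment_closed, sos_Z_closed; unfold eps_geom.
  assert (Hgap : INR (d - c) = INR d - INR c) by (apply minus_INR; lia).
  assert (0 < K) by apply exp_pos.
  assert (0 <= geom x c) by (apply geom_nonneg, Rlt_le, exp_pos).
  assert (0 <= geom x (n - d)) by (apply geom_nonneg, Rlt_le, exp_pos).
  assert (0 <= INR (d - c)) by apply pos_INR.
  rewrite S_INR, Hgap in *.
  field; lra.
Qed.

End ClosedForm.

Definition eps_rat (x s L u m v : R) : R :=
  let y := 1 - x in
  let GL := x * (1 - u) / y in
  let Gm := x * (1 - v) / y in
  let HL := x * (1 - u - L * u * y) / (y * y) in
  let Hm := x * (1 - v - m * v * y) / (y * y) in
  (s / 2 * (Gm - GL) + Hm - HL) / (s + 1 + GL + Gm).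

Lemma eps_geom_rat x s L m : 0 < x < 1 ->
  eps_geom x s L m = eps_rat x s (INR L) (x ^ L) (INR m) (x ^ m).
Proof.
  intros Hx; unfold eps_geom, eps_rat.
  rewrite !geom_closed, !geom_moment_closed by lra; reflexivity.
Qed.

Lemma eps_rat_swap x s L u m v : eps_rat x s L u m v = - eps_rat x s m v L u.
Proof.
  unfold eps_rat; cbv zeta.
  set (GL := x * (1 - u) / (1 - x)); set (Gm := x * (1 - v) / (1 - x)).
  replace (s + 1 + Gm + GL) with (s + 1 + GL + Gm) by ring.
  unfold Rdiv; ring.
Qed.

(* Clearing denominators, the difference of the two sides is
   [cert / (2 y^2 Z1 Z2)] with every summand of [cert] nonnegative. *)
Lemma eps_rat_shift_right x s L u m w :
  0 < x < 1 -> 0 < u <= 1 -> 0 < w <= 1 -> 0 <= s -> 0 <= L -> 0 <= m ->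
  eps_rat x (s + 1) L u m w <= eps_rat x s L u (m + 1) (x * w).
Proof.
  intros Hx Hu Hw Hs HL Hm; unfold eps_rat.
  set (y := 1 - x); set (v := x * w).
  assert (Hy : 0 < y) by (unfold y; lra).
  assert (Hv : 0 < v <= 1) by (unfold v; split; nra).
  assert (0 <= x * (1 - u) / y) by (apply Rle_mult_inv_pos; nra).
  assert (0 <= x * (1 - w) / y) by (apply Rle_mult_inv_pos; nra).
  assert (0 <= x * (1 - v) / y) by (apply Rle_mult_inv_pos; nra).
  set (Z1 := s + 1 + 1 + x * (1 - u) / y + x * (1 - w) / y).
  set (Z2 := s + 1 + x * (1 - u) / y + x * (1 - v) / y).
  assert (0 < Z1) by (unfold Z1; lra).
  assert (0 < Z2) by (unfold Z2; lra).
  set (cert := x * (v - u) ^ 2 + x * y * u * (1 - u)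
     + v * y * (1 - x * u) * (1 + 2 * (m + 1)) + 2 * x * L * u * y * (1 - v)
     + v * (y * y * (s * s + 2 * s) + 2 * s * x * (1 - u) * y)
     + 2 * (m + 1) * v * y * y * s).
  assert (Hcert : 0 <= cert).
  { assert (0 <= 1 - x * u) by nra.
    assert (0 <= x * (v - u) ^ 2) by (apply Rmult_le_pos; [lra | apply pow2_ge_0]).
    assert (0 <= x * y * u * (1 - u)) by (repeat apply Rmult_le_pos; lra).
    assert (0 <= v * y * (1 - x * u) * (1 + 2 * (m + 1)))
      by (repeat apply Rmult_le_pos; lra).
    assert (0 <= 2 * x * L * u * y * (1 - v)) by (repeat apply Rmult_le_pos; lra).
    assert (0 <= y * y * (s * s + 2 * s)) by (repeat apply Rmult_le_pos; nra).
    assert (0 <= 2 * s * x * (1 - u) * y) by (repeat apply Rmult_le_pos; lra).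
    assert (0 <= v * (y * y * (s * s + 2 * s) + 2 * s * x * (1 - u) * y))
      by (apply Rmult_le_pos; lra).
    assert (0 <= 2 * (m + 1) * v * y * y * s) by (repeat apply Rmult_le_pos; lra).
    unfold cert; lra. }
  match goal with |- ?A / ?B <= ?C / ?D =>
    assert (Hdiff : C / D - A / B = cert / (2 * y * y * Z1 * Z2)) end.
  { assert (0 < (s + 1) * (1 - x)) by nra.
    assert (0 < (s + 1 + 1) * (1 - x)) by nra.
    assert (0 <= x * (1 - u)) by nra.
    assert (0 <= x * (1 - w)) by nra.
    assert (0 <= x * (1 - x * w)) by nra.
    unfold cert, Z1, Z2, v, y; field; repeat split; lra. }
  assert (0 <= cert / (2 * y * y * Z1 * Z2)).
  { apply Rle_mult_inv_pos; [lra|]; repeat apply Rmult_lt_0_compat; lra. }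
  lra.
Qed.

Lemma pow_in_unit x k : 0 < x < 1 -> 0 < x ^ k <= 1.
Proof. intros Hx; induction k; simpl; [lra | split; nra]. Qed.

Lemma eps_geom_shift_right x s L m : 0 < x < 1 -> 0 <= s ->
  eps_geom x (s + 1) L m <= eps_geom x s L (S m).
Proof.
  intros Hx Hs; rewrite !eps_geom_rat, S_INR by lra; cbn [pow].
  apply eps_rat_shift_right; auto using pow_in_unit, pos_INR.
Qed.

Lemma eps_geom_shift_left x s L m : 0 < x < 1 -> 0 <= s ->
  eps_geom x s (S L) m <= eps_geom x (s + 1) L m.
Proof.
  intros Hx Hs; rewrite !eps_geom_rat, (eps_rat_swap _ _ (INR (S L))),
    (eps_rat_swap _ _ (INR L)), S_INR by lra; cbn [pow].
  apply Ropp_le_contravar, eps_rat_shift_right; auto using pow_in_unit, pos_INR.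
Qed.

Section Monotonicity.
Variables (beta : R) (n : nat).
Hypothesis Hbeta : 0 < beta.

Let x_in_unit : 0 < exp (-2 * beta) < 1.
Proof. split; [apply exp_pos | rewrite <- exp_0; apply exp_increasing; lra]. Qed.

Lemma eps_succ_right c d : (c <= d < n)%nat -> eps beta n c (S d) <= eps beta n c d.
Proof.
  intros Hcd; rewrite !eps_closed by lia.
  replace (n - d)%nat with (S (n - S d)) by lia.
  rewrite S_INR.
  replace (INR d + 1 - INR c) with (INR d - INR c + 1) by ring.
  apply eps_geom_shift_right; [exact x_in_unit|].
  assert (INR c <= INR d) by (apply le_INR; lia); lra.
Qed.

Lemma eps_succ_left c d : (c < d <= n)%nat -> eps beta n (S c) d <= eps beta n c d.
Proof.
  intros Hcd; rewrite !eps_closed by lia.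
  rewrite S_INR.
  replace (INR d - INR c) with (INR d - (INR c + 1) + 1) by ring.
  apply eps_geom_shift_left; [exact x_in_unit|].
  assert (INR (S c) <= INR d) by (apply le_INR; lia); rewrite S_INR in *; lra.
Qed.

Lemma eps_antitone_right c d d' : (c <= d <= d')%nat -> (d' <= n)%nat ->
  eps beta n c d' <= eps beta n c d.
Proof.
  intros Hd Hd'; replace d' with (d + (d' - d))%nat in * by lia.
  revert Hd'; induction (d' - d)%nat as [|k IH]; intros Hk; [rewrite Nat.add_0_r; lra|].
  rewrite Nat.add_succ_r; eapply Rle_trans; [apply eps_succ_right; lia | apply IH; lia].
Qed.

Lemma eps_antitone_left c c' d : (c <= c' <= d)%nat -> (d <= n)%nat ->
  eps beta n c' d <= eps beta n c d.
Proof.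
  intros Hc Hd; replace c' with (c + (c' - c))%nat in * by lia.
  revert Hc; induction (c' - c)%nat as [|k IH]; intros Hk; [rewrite Nat.add_0_r; lra|].
  rewrite Nat.add_succ_r; eapply Rle_trans; [apply eps_succ_left; lia | apply IH; lia].
Qed.

Lemma eps_nonneg a b : (a <= b)%nat -> (a + b <= n)%nat -> 0 <= eps beta n a b.
Proof.
  intros Hab Hsum; rewrite eps_closed by lia; unfold eps_geom.
  pose proof x_in_unit as Hx; set (x := exp (-2 * beta)) in *.
  replace (n - b)%nat with (a + (n - b - a))%nat by lia.
  pose proof (geom_le_app x a (n - b - a)).
  pose proof (geom_moment_le_app x a (n - b - a)).
  pose proof (geom_nonneg x a); pose proof (geom_nonneg x (a + (n - b - a))).
  assert (INR a <= INR b) by (apply le_INR; lia).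
  apply Rle_mult_inv_pos; [|lra].
  assert (0 <= (INR b - INR a) / 2 * (geom x (a + (n - b - a)) - geom x a))
    by (apply Rmult_le_pos; lra).
  lra.
Qed.

End Monotonicity.

Theorem lemma3p2 (beta : R) (n a b : nat) :
  0 < beta -> (1 <= n)%nat ->
  (a <= b)%nat -> (b <= n)%nat -> (a + b <= n)%nat ->
  0 <= eps beta n a b /\
  (forall c d : nat,
      (c <= Nat.min a d)%nat -> (Nat.max a d <= b)%nat ->
      eps beta n a b <= eps beta n c d).
Proof.
  intros Hbeta _ Hab Hbn Hsum; split.
  - now apply eps_nonneg.
  - intros c d Hc Hd.
    apply Rle_trans with (eps beta n c b).
    + apply eps_antitone_left; [exact Hbeta | lia | lia].
    + apply eps_antitone_right; [exact Hbeta | lia | lia].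
Qed.
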